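(* Quaternary Hermitian formally self-dual LCD codes with parameters $[32s,16s,6]_4$, $[40s,20s,7]_4$ and $[48s,24s,8]_4$ exist for every integer $s\ge1$.
   Context: Over $\mathbb{F}_4$ the Hermitian inner product is $(\mathbf{x},\mathbf{y})_H=\sum_i x_iy_i^{2}$, with dual $\mathcal{C}^{\perp_H}$. A code is Hermitian LCD if $\mathcal{C}\cap\mathcal{C}^{\perp_H}=\{0\}$, and Hermitian formally self-dual if it has the same weight distribution as $\mathcal{C}^{\perp_H}$. $[n,k,d]_4$ denotes length $n$, dimension $k$, minimum distance $d$. *)

(* Codes over F_4: F is any finite field with 4 elements
   (unique up to isomorphism); a linear [n,k] code is a k-dimensional
   subspace of the row space 'rV[F]_n. *)
From HB Require Import structures.
From mathcomp Require Import all_boot all_order all_algebra all_field.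
Set Implicit Arguments. Unset Strict Implicit. Unset Printing Implicit Defensive.
Import GRing.Theory.
Local Open Scope ring_scope.

Section Codes.
Variables (F : finFieldType) (n : nat).

Definition wt (x : 'rV[F]_n) : nat := #|[set i : 'I_n | x 0 i != 0]|.

Definition herm (x y : 'rV[F]_n) : F := \sum_(i < n) x 0 i * (y 0 i) ^+ 2.

Definition herm_dual (C : {vspace 'rV[F]_n}) : {set 'rV[F]_n} :=
  [set y | [forall x, (x \in C) ==> (herm x y == 0)]].

Definition herm_LCD (C : {vspace 'rV[F]_n}) : Prop :=
  forall y, y \in C -> y \in herm_dual C -> y = 0.

Definition herm_formally_self_dual (C : {vspace 'rV[F]_n}) : Prop :=
  forall w : nat,
    #|[set x : 'rV[F]_n | (x \in C) && (wt x == w)]| =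
    #|[set y in herm_dual C | wt y == w]|.

(* minimum distance of a linear code = minimum nonzero weight *)
Definition min_dist_is (C : {vspace 'rV[F]_n}) (d : nat) : Prop :=
  (exists2 x, x \in C & (x != 0) /\ wt x = d) /\
  (forall x, x \in C -> x != 0 -> (d <= wt x)%N).

Definition herm_fsd_LCD_code (C : {vspace 'rV[F]_n}) (k d : nat) : Prop :=
  \dim C = k /\ min_dist_is C d /\ herm_LCD C /\ herm_formally_self_dual C.

End Codes.

From mathcomp Require Import all_boot all_order all_algebra all_field.
From mathcomp Require Import ring zify.
Set Implicit Arguments. Unset Strict Implicit. Unset Printing Implicit Defensive.
Import GRing.Theory.
Local Open Scope ring_scope.

(* Over F_4, with conjugation x |-> x^2, take a k x k matrix A with A^T equal
   to the conjugate of A and consider the systematic code C = {(m, mA)}.  Its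
   Hermitian dual is {(vA, v)}, the image of C under the weight-preserving swap
   of the two halves, so C is formally self-dual; and a word (m, mA) = (vA, v)
   in both forces m (I + A^2) = 0, so C is Hermitian LCD as soon as I + A^2 is
   invertible.  All of this, and the minimum distance, is preserved by
   block-diagonal sums, so it suffices to exhibit such matrices of sizes 8, 10
   and 12 with minimum distances 6, 7 and 8.  These are verified by
   computation; for the minimum distance it is enough to enumerate messages m
   of weight at most r, for A and for A^-1, where d <= 2(r + 1): if m and mA
   both have weight > r there is nothing to check. *)

Section Weight.
Variable F : finFieldType.

Lemma wt_row_mx n1 n2 (a : 'rV[F]_n1) (b : 'rV[F]_n2) :
  wt (row_mx a b) = (wt a + wt b)%N.
Proof.
rewrite /wt -!sum1dep_card big_split_ord /=.
by congr (_ + _)%N; apply: eq_bigl => i; rewrite ?row_mxEl ?row_mxEr.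
Qed.

Lemma wt_eq0 n (x : 'rV[F]_n) : (wt x == 0%N) = (x == 0).
Proof.
rewrite /wt cards_eq0; apply/eqP/eqP => [x0 | ->].
  by apply/rowP => i; move/setP/(_ i): x0; rewrite !inE !mxE => /negbFE/eqP.
by apply/setP => i; rewrite !inE mxE eqxx.
Qed.

Lemma wt0 n : wt (0 : 'rV[F]_n) = 0%N.
Proof. by apply/eqP; rewrite wt_eq0. Qed.

Lemma wt_lb_of_low_wt K r d (A B : 'M[F]_K) :
  A *m B = 1%:M -> (d <= 2 * r.+1)%N ->
  (forall m, m != 0 -> (wt m <= r)%N -> (d <= wt m + wt (m *m A))%N) ->
  (forall m, m != 0 -> (wt m <= r)%N -> (d <= wt m + wt (m *m B))%N) ->
  forall m, m != 0 -> (d <= wt m + wt (m *m A))%N.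
Proof.
move=> AB1 d_le lowA lowB m m_nz.
have [m_low | m_high] := leqP (wt m) r; first exact: lowA.
have mAB : m *m A *m B = m by rewrite -mulmxA AB1 mulmx1.
have mA_nz : m *m A != 0 by apply: contraNneq m_nz => mA0; rewrite -mAB mA0 mul0mx.
have [mA_low | mA_high] := leqP (wt (m *m A)) r.
  by rewrite addnC -{2}mAB; exact: lowB.
by apply: leq_trans d_le _; rewrite mul2n -addnn leq_add.
Qed.

End Weight.

Section SystematicCode.
Variable F : finFieldType.
Hypothesis pcharF : 2 \in [pchar F].

Lemma sqrD_pchar2 (x y : F) : (x + y) ^+ 2 = x ^+ 2 + y ^+ 2.
Proof. exact: (rmorphD (pFrobenius_aut pcharF)). Qed.

Lemma sqr_sum_pchar2 (I : finType) (E : I -> F) :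
  (\sum_i E i) ^+ 2 = \sum_i E i ^+ 2.
Proof. exact: (rmorph_sum (pFrobenius_aut pcharF)). Qed.

Definition hermitian_mx K (A : 'M[F]_K) := forall i j, A j i = A i j ^+ 2.

Record lcd_generator K (d : nat) (A : 'M[F]_K) : Prop := LcdGenerator {
  generator_hermitian : hermitian_mx A;
  generator_unit : 1%:M + A *m A \in unitmx;
  generator_wt_lb : forall m, m != 0 -> (d <= wt m + wt (m *m A))%N;
  generator_wt_attained : exists2 m, m != 0 & (wt m + wt (m *m A))%N = d }.

Variable K : nat.
Implicit Types (A : 'M[F]_K) (x y : 'rV[F]_(K + K)).

Definition encoder A : 'Hom('rV[F]_K, 'rV[F]_(K + K)) :=
  linfun (mulmxr (row_mx 1%:M A)).

Definition systematic_code A : {vspace 'rV[F]_(K + K)} := limg (encoder A).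

Lemma encoderE A m : encoder A m = row_mx m (m *m A).
Proof. by rewrite lfunE /= mul_mx_row mulmx1. Qed.

Lemma mem_systematic_code A x :
  (x \in systematic_code A) = (rsubmx x == lsubmx x *m A).
Proof.
apply/memv_imgP/eqP => [[m _ ->] | xA].
  by rewrite encoderE row_mxKl row_mxKr.
by exists (lsubmx x); rewrite ?memvf // encoderE -xA hsubmxK.
Qed.

Lemma dim_systematic_code A : \dim (systematic_code A) = K.
Proof.
rewrite limg_dim_eq ?dimvf ?dim_matrix; first exact: mul1n.
rewrite capfv; apply/eqP; rewrite -subv0; apply/subvP => m.
by rewrite memv_ker memv0 encoderE row_mx_eq0 => /andP[].
Qed.

Lemma herm_systematic_code A m a b : hermitian_mx A ->
  herm (row_mx m (m *m A)) (row_mx a b) =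
  \sum_i m 0 i * (a 0 i + (b *m A) 0 i) ^+ 2.
Proof.
move=> hermA; rewrite /herm big_split_ord /=.
under eq_bigr do rewrite !row_mxEl.
under [X in _ + X]eq_bigr do rewrite !row_mxEr mxE big_distrl /=.
rewrite exchange_big -big_split /=; apply: eq_bigr => i _.
rewrite sqrD_pchar2 mulrDr; congr (_ + _).
rewrite mxE sqr_sum_pchar2 big_distrr /=; apply: eq_bigr => j _.
by rewrite (hermA j i) exprMn -mulrA [A j i ^+ 2 * _]mulrC.
Qed.

Lemma mem_herm_dual_systematic_code A y : hermitian_mx A ->
  (y \in herm_dual (systematic_code A)) = (lsubmx y == rsubmx y *m A).
Proof.
move=> hermA; rewrite inE; apply/forallP/eqP => [dualy | yA x].
  apply/rowP => i; pose e : 'rV[F]_K := \row_j (j == i)%:R.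
  have /implyP := dualy (row_mx e (e *m A)).
  rewrite mem_systematic_code row_mxKl row_mxKr eqxx -{1}(hsubmxK y).
  rewrite herm_systematic_code //.
  rewrite (bigD1 i) //= big1 => [|j /negbTE ji]; last by rewrite !mxE ji mul0r.
  rewrite !mxE eqxx mul1r addr0 expf_eq0 addr_eq0 (oppr_pchar2 pcharF).
  by move=> /(_ isT)/eqP.
apply/implyP; rewrite mem_systematic_code => /eqP xA.
rewrite -(hsubmxK x) -(hsubmxK y) xA herm_systematic_code // yA big1 // => i _.
by rewrite addrr_pchar2 // expr0n mulr0.
Qed.

Definition swap_halves x : 'rV[F]_(K + K) := row_mx (rsubmx x) (lsubmx x).

Lemma swap_halvesK : involutive swap_halves.
Proof. by move=> x; rewrite /swap_halves row_mxKl row_mxKr hsubmxK. Qed.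

Lemma wt_swap_halves x : wt (swap_halves x) = wt x.
Proof. by rewrite /swap_halves wt_row_mx -{3}(hsubmxK x) wt_row_mx addnC. Qed.

Lemma mem_herm_dual_swap A y : hermitian_mx A ->
  (y \in herm_dual (systematic_code A)) = (swap_halves y \in systematic_code A).
Proof.
move=> hermA; rewrite mem_herm_dual_systematic_code //.
by rewrite mem_systematic_code row_mxKl row_mxKr.
Qed.

Lemma systematic_code_herm_fsd A : hermitian_mx A ->
  herm_formally_self_dual (systematic_code A).
Proof.
move=> hermA w; rewrite -(card_imset _ (can_inj swap_halvesK)).
rewrite (can2_imset_pre _ swap_halvesK swap_halvesK); apply: eq_card => y.
by rewrite !inE wt_swap_halves -mem_herm_dual_swap // inE.
Qed.

Lemma systematic_code_herm_LCD A : 1%:M + A *m A \in unitmx -> hermitian_mx A ->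
  herm_LCD (systematic_code A).
Proof.
move=> unitA hermA y; rewrite mem_systematic_code mem_herm_dual_systematic_code //.
move=> /eqP yr /eqP yl.
have yl0 : lsubmx y = 0.
  have free : row_free (1%:M + A *m A) by rewrite row_free_unit.
  apply/eqP; rewrite -(mulmx_free_eq0 _ free).
  by rewrite mulmxDr mulmx1 mulmxA -yr -yl -mulr2n -scaler_nat (pcharf0 pcharF) scale0r.
by rewrite -(hsubmxK y) yr yl0 mul0mx row_mx0.
Qed.

Lemma systematic_code_min_dist d A :
  (forall m, m != 0 -> (d <= wt m + wt (m *m A))%N) ->
  (exists2 m, m != 0 & (wt m + wt (m *m A))%N = d) ->
  min_dist_is (systematic_code A) d.
Proof.
move=> wt_lb [m m_nz wt_m]; split.
  exists (row_mx m (m *m A)); first by rewrite mem_systematic_code row_mxKl row_mxKr.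
  by rewrite row_mx_eq0 negb_and m_nz wt_row_mx.
move=> x; rewrite mem_systematic_code => /eqP xA x_nz.
rewrite -(hsubmxK x) xA wt_row_mx wt_lb //.
by apply: contraNneq x_nz => x0; rewrite -(hsubmxK x) xA x0 mul0mx row_mx0.
Qed.

Theorem systematic_code_herm_fsd_LCD d A : lcd_generator d A ->
  herm_fsd_LCD_code (systematic_code A) K d.
Proof.
case=> hermA unitA wt_lb wt_attained; split; first exact: dim_systematic_code.
split; first exact: systematic_code_min_dist.
by split; [exact: systematic_code_herm_LCD | exact: systematic_code_herm_fsd].
Qed.

End SystematicCode.

Section BlockSum.
Variable F : finFieldType.
Variables (d K1 K2 : nat) (A1 : 'M[F]_K1) (A2 : 'M[F]_K2).

Lemma mul_row_block_diag (m1 : 'rV[F]_K1) (m2 : 'rV[F]_K2) :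
  row_mx m1 m2 *m block_mx A1 0 0 A2 = row_mx (m1 *m A1) (m2 *m A2).
Proof. by rewrite mul_row_block !mulmx0 addr0 add0r. Qed.

Lemma hermitian_block_diag : hermitian_mx A1 -> hermitian_mx A2 ->
  hermitian_mx (block_mx A1 0 0 A2).
Proof.
move=> herm1 herm2 i j.
case: (split_ordP i) => i' ->; case: (split_ordP j) => j' ->;
  by rewrite ?block_mxEul ?block_mxEur ?block_mxEdl ?block_mxEdr ?mxE ?expr0n.
Qed.

Lemma lcd_unit_block_diag :
  1%:M + A1 *m A1 \in unitmx -> 1%:M + A2 *m A2 \in unitmx ->
  1%:M + block_mx A1 0 0 A2 *m block_mx A1 0 0 A2 \in unitmx.
Proof.
rewrite mulmx_block !mulmx0 !mul0mx !addr0 add0r scalar_mx_block add_block_mx.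
by rewrite !addr0 !unitmxE det_ublock unitrM => -> ->.
Qed.

Lemma lcd_generator_block_diag : lcd_generator d A1 -> lcd_generator d A2 ->
  lcd_generator d (block_mx A1 0 0 A2).
Proof.
case=> herm1 unit1 lb1 [m m_nz wt_m] [herm2 unit2 lb2 _]; split.
- exact: hermitian_block_diag.
- exact: lcd_unit_block_diag.
- move=> m'; rewrite -(hsubmxK m') mul_row_block_diag row_mx_eq0 negb_and.
  rewrite !wt_row_mx addnACA => /orP[/lb1 | /lb2] lb.
    exact: leq_trans lb (leq_addr _ _).
  exact: leq_trans lb (leq_addl _ _).
- exists (row_mx m 0); first by rewrite row_mx_eq0 negb_and m_nz.
  by rewrite mul_row_block_diag mul0mx !wt_row_mx wt0 !addn0.
Qed.

End BlockSum.

Lemma lcd_generator_copies (F : finFieldType) k d (A : 'M[F]_k) t :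
  lcd_generator d A -> exists B : 'M[F]_(k * t.+1), lcd_generator d B.
Proof.
move=> genA; elim: t => [|t [B genB]]; first by rewrite muln1; exists A.
by rewrite mulnS; exists (block_mx A 0 0 B); exact: lcd_generator_block_diag.
Qed.

Lemma exists_herm_fsd_LCD_code (F : finFieldType) k d (A : 'M[F]_k) t n :
  2 \in [pchar F] -> lcd_generator d A -> (0 < t)%N -> n = (k * t + k * t)%N ->
  exists C : {vspace 'rV[F]_n}, herm_fsd_LCD_code C (k * t) d.
Proof.
move=> pcharF genA; case: t => // t _ ->.
have [B genB] := lcd_generator_copies t genA.
by exists (systematic_code B); exact: systematic_code_herm_fsd_LCD.
Qed.

Lemma exists_gf4_root (F : finFieldType) :
  2 \in [pchar F] -> #|F| = 4%N -> exists w : F, w * w = 1 + w.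
Proof.
move=> pcharF cardF.
have [w /andP[w_nz w_neq1]] : exists w : F, (w != 0) && (w != 1).
  apply/existsP; apply: contraT; rewrite negb_exists => /forallP only01.
  have sub01 : [set: F] \subset [set 0; 1].
    apply/subsetP => x _; move: (only01 x); rewrite negb_and !negbK !inE.
    by case/orP => /eqP ->; rewrite eqxx ?orbT.
  by have := subset_leq_card sub01; rewrite cardsT cardF cards2; case: (_ != _).
exists w.
have w3 : w ^+ 3 = 1.
  by apply: (mulfI w_nz); rewrite -exprS -{2}(expf_card w) cardF mulr1.
have : (w - 1) * (w * w + w + 1) = 0.
  have -> : (w - 1) * (w * w + w + 1) = w ^+ 3 - 1 by ring.
  by rewrite w3 subrr.
move/eqP; rewrite mulf_eq0 subr_eq0 (negbTE w_neq1) -addrA addr_eq0 => /eqP ->.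
by rewrite (oppr_pchar2 pcharF) addrC.
Qed.

(* Digits 0, 1, 2, 3 stand for 0, 1, w, w^2 = 1 + w of F_4 = F_2(w); a digit
   above 3 is read as 3. *)
Definition add4 (a b : nat) : nat :=
  match a, b with
  | 0, _ => b | _, 0 => a
  | 1, 1 => 0 | 1, 2 => 3 | 1, _ => 2
  | 2, 1 => 3 | 2, 2 => 0 | 2, _ => 1
  | _, 1 => 2 | _, 2 => 1 | _, _ => 0
  end.

Definition mul4 (a b : nat) : nat :=
  match a, b with
  | 0, _ | _, 0 => 0
  | 1, _ => b | _, 1 => a
  | 2, 2 => 3 | 2, _ => 1
  | _, 2 => 1 | _, _ => 2
  end.

Definition wt4 (l : seq nat) : nat := count (predC1 0%N) l.

Definition ent4 (L : seq (seq nat)) (i j : nat) : nat := nth 0 (nth [::] L i) j.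

Definition dot4 k (f g : nat -> nat) : nat :=
  foldr (fun i acc => add4 (mul4 (f i) (g i)) acc) 0 (iota 0 k).

Definition vmul4 k (l : seq nat) (L : seq (seq nat)) : seq nat :=
  mkseq (fun j => dot4 k (nth 0 l) (fun i => ent4 L i j)) k.

Definition mmul4 k (L M : seq (seq nat)) : seq (seq nat) :=
  mkseq (fun i => vmul4 k (nth [::] L i) M) k.

Definition madd4 k (L M : seq (seq nat)) : seq (seq nat) :=
  mkseq (fun i => mkseq (fun j => add4 (ent4 L i j) (ent4 M i j)) k) k.

Definition id4 k : seq (seq nat) :=
  mkseq (fun i => mkseq (fun j => (i == j : nat)) k) k.

Fixpoint low_wt_words k r : seq (seq nat) :=
  if k is k'.+1 then
    [seq 0 :: l | l <- low_wt_words k' r] ++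
    (if r is r'.+1 then [seq a :: l | a <- [:: 1; 2; 3], l <- low_wt_words k' r']
     else [::])
  else [:: [::]].

Definition hermitian4 k (L : seq (seq nat)) : bool :=
  all (fun i => all (fun j => ent4 L j i == mul4 (ent4 L i j) (ent4 L i j))
                    (iota 0 k)) (iota 0 k).

Definition low_wt_bound4 k r d (L : seq (seq nat)) : bool :=
  all (fun l => (wt4 l == 0) || (d <= wt4 l + wt4 (vmul4 k l L))%N) (low_wt_words k r).

Definition certificate k d r (A Ainv Cinv : seq (seq nat)) (m0 : seq nat) : bool :=
  [&& (d <= 2 * r.+1)%N, hermitian4 k A, mmul4 k A Ainv == id4 k,
      mmul4 k (madd4 k (id4 k) (mmul4 k A A)) Cinv == id4 k,
      size m0 == k, wt4 m0 != 0%N, (wt4 m0 + wt4 (vmul4 k m0 A) == d)%N,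
      low_wt_bound4 k r d A & low_wt_bound4 k r d Ainv].

Lemma mem_low_wt_words k r l : size l = k -> all (fun a => a < 4)%N l ->
  (wt4 l <= r)%N -> l \in low_wt_words k r.
Proof.
elim: k r l => [|k IH] r [|a l] //= [size_l] /andP[a_lt4 digits_l].
rewrite mem_cat; case: a a_lt4 => [|a] a_lt4 wt_l; first by rewrite map_f ?IH.
case: r wt_l => [|r] //= wt_l; have l_low : l \in low_wt_words k r by exact: IH.
by case: a a_lt4 {wt_l} => [|[|[|]]] // _; rewrite !mem_cat map_f ?orbT.
Qed.

Section Gf4Decoding.
Variable F : finFieldType.
Hypotheses (pcharF : 2 \in [pchar F]) (cardF : #|F| = 4%N).
Variable w : F.
Hypothesis ww : w * w = 1 + w.

Definition gf4 (a : nat) : F :=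
  match a with 0 => 0 | 1 => 1 | 2 => w | _ => 1 + w end.

Definition gf4_row k (l : seq nat) : 'rV[F]_k := \row_(i < k) gf4 (nth 0%N l i).

Definition gf4_mx k (L : seq (seq nat)) : 'M[F]_k :=
  \matrix_(i < k, j < k) gf4 (ent4 L i j).

Lemma gf4_w_neq0 : w != 0.
Proof.
by apply/eqP => w0; move: ww; rewrite w0 mul0r addr0 => /esym/eqP; rewrite oner_eq0.
Qed.

Lemma gf4_w1_neq0 : 1 + w != 0.
Proof. by rewrite -ww mulf_neq0 // gf4_w_neq0. Qed.

Lemma gf4_eq0 a : (gf4 a == 0) = (a == 0%N).
Proof.
case: a => [|[|[|a]]] /=; rewrite ?eqxx ?oner_eq0 //.
  exact: negbTE gf4_w_neq0.
exact: negbTE gf4_w1_neq0.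
Qed.

Lemma gf4_add a b : gf4 (add4 a b) = gf4 a + gf4 b.
Proof.
have xx := addrr_pchar2 pcharF.
case: a => [|[|[|a]]]; case: b => [|[|[|b]]]; rewrite /= ?add0r ?addr0 ?xx //;
  first [ by rewrite addrA xx add0r | by rewrite addrC | by rewrite addrCA xx addr0
        | by rewrite addrAC xx add0r | by rewrite -addrA xx addr0 ].
Qed.

Lemma gf4_mul a b : gf4 (mul4 a b) = gf4 a * gf4 b.
Proof.
have w_w1 : w * (1 + w) = 1.
  by rewrite mulrDr mulr1 ww addrCA (addrr_pchar2 pcharF) addr0.
have w1_w1 : (1 + w) * (1 + w) = w.
  by rewrite mulrDl mul1r w_w1 addrAC (addrr_pchar2 pcharF) add0r.
case: a => [|[|[|a]]]; case: b => [|[|[|b]]];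
  by rewrite /= ?mul0r ?mulr0 ?mul1r ?mulr1 ?ww ?w_w1 ?w1_w1 // mulrC.
Qed.

Lemma gf4_inj a b : (a < 4)%N -> (b < 4)%N -> gf4 a = gf4 b -> a = b.
Proof.
move=> a_lt4 b_lt4 ab; have : gf4 (add4 a b) == 0.
  by rewrite gf4_add ab (addrr_pchar2 pcharF).
by rewrite gf4_eq0; case: a a_lt4 {ab} => [|[|[|[|]]]]; case: b b_lt4 => [|[|[|[|]]]].
Qed.

Lemma gf4_surj (x : F) : exists a, (a < 4)%N && (gf4 a == x).
Proof.
pose S := [set gf4 a | a : 'I_4].
have cardS : #|S| = 4%N.
  rewrite card_imset ?card_ord // => a b ab.
  exact/val_inj/(gf4_inj (ltn_ord a) (ltn_ord b)).
have : x \in S.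
  by rewrite (_ : S = setT) //; apply/eqP; rewrite eqEcard subsetT cardsT cardF cardS.
by case/imsetP => a _ ->; exists (val a); rewrite ltn_ord eqxx.
Qed.

Lemma gf4_row_surj k (v : 'rV[F]_k) :
  exists2 l, size l = k /\ all (fun a => a < 4)%N l & v = gf4_row k l.
Proof.
pose g x := xchoose (gf4_surj x).
have gP x : (g x < 4)%N && (gf4 (g x) == x) := xchooseP (gf4_surj x).
exists [seq g (v 0 i) | i <- enum 'I_k]; first split.
- by rewrite size_map size_enum_ord.
- by apply/allP => a /mapP [i _ ->]; case/andP: (gP (v 0 i)).
apply/rowP => i; rewrite mxE (nth_map i) ?size_enum_ord // nth_ord_enum.
by case/andP: (gP (v 0 i)) => _ /eqP ->.
Qed.

Lemma wt_gf4_row k l : size l = k -> wt (gf4_row k l) = wt4 l.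
Proof.
move=> size_l; rewrite /wt /wt4 -sum1dep_card -sum1_count.
rewrite (big_nth 0%N) big_mkord size_l.
by apply: eq_bigl => i; rewrite mxE gf4_eq0.
Qed.

Lemma gf4_dot k f g : gf4 (dot4 k f g) = \sum_(i < k) gf4 (f i) * gf4 (g i).
Proof.
rewrite /dot4 -(big_mkord xpredT (fun i => gf4 (f i) * gf4 (g i))) /index_iota subn0.
by elim: (iota 0 k) => [|i s IH] /=; rewrite ?big_nil // big_cons gf4_add gf4_mul IH.
Qed.

Lemma gf4_row_mul k l L : gf4_row k l *m gf4_mx k L = gf4_row k (vmul4 k l L).
Proof.
apply/rowP => j; rewrite !mxE /vmul4 nth_mkseq // gf4_dot.
by apply: eq_bigr => i _; rewrite !mxE.
Qed.

Lemma gf4_mx_mul k L M : gf4_mx k L *m gf4_mx k M = gf4_mx k (mmul4 k L M).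
Proof.
apply/matrixP => i j; rewrite !mxE /ent4 /mmul4 /vmul4 !nth_mkseq // gf4_dot.
by apply: eq_bigr => l _; rewrite !mxE.
Qed.

Lemma gf4_mx_add k L M : gf4_mx k L + gf4_mx k M = gf4_mx k (madd4 k L M).
Proof.
by apply/matrixP => i j; rewrite !mxE {3}/ent4 /madd4 !nth_mkseq // gf4_add.
Qed.

Lemma gf4_mx_id k : gf4_mx k (id4 k) = 1%:M.
Proof.
by apply/matrixP => i j; rewrite !mxE /ent4 /id4 !nth_mkseq // val_eqE; case: (i == j).
Qed.

Lemma hermitian_gf4_mx k L : hermitian4 k L -> hermitian_mx (gf4_mx k L).
Proof.
have iota_ord (i : 'I_k) : (i : nat) \in iota 0 k by rewrite mem_iota ltn_ord.
move=> /allP hermL i j; have /allP/(_ j (iota_ord j))/eqP := hermL i (iota_ord i).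
by rewrite !mxE => ->; rewrite gf4_mul expr2.
Qed.

Lemma gf4_mx_low_wt_bound k r d L : low_wt_bound4 k r d L ->
  forall m, m != 0 -> (wt m <= r)%N -> (d <= wt m + wt (m *m gf4_mx k L))%N.
Proof.
move=> /allP lowL m; have [l [size_l digits_l] ->] := gf4_row_surj m.
rewrite gf4_row_mul !wt_gf4_row ?size_mkseq // => m_nz wt_l.
have := lowL l (mem_low_wt_words size_l digits_l wt_l).
by rewrite -(wt_gf4_row size_l) wt_eq0 (negbTE m_nz).
Qed.

Lemma certificate_lcd_generator k d r A Ainv Cinv m0 :
  certificate k d r A Ainv Cinv m0 -> lcd_generator d (gf4_mx k A).
Proof.
case/and5P => d_le hermA /eqP AAinv /eqP lcdC.
case/and5P => /eqP size_m0 m0_nz /eqP wt_m0 lowA lowAinv.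
split.
- exact: hermitian_gf4_mx.
- have /mulmx1_unit[] // : (1%:M + gf4_mx k A *m gf4_mx k A) *m gf4_mx k Cinv = 1%:M.
  by rewrite -gf4_mx_id gf4_mx_mul gf4_mx_add gf4_mx_mul lcdC.
- apply: (wt_lb_of_low_wt (B := gf4_mx k Ainv)) d_le _ _.
  + by rewrite gf4_mx_mul AAinv gf4_mx_id.
  + exact: gf4_mx_low_wt_bound.
  + exact: gf4_mx_low_wt_bound.
- exists (gf4_row k m0); last by rewrite gf4_row_mul !wt_gf4_row ?size_mkseq.
  by rewrite -wt_eq0 wt_gf4_row.
Qed.

End Gf4Decoding.

Definition A8 : seq (seq nat) := [::
  [:: 0; 3; 3; 0; 1; 1; 2; 0];
  [:: 2; 1; 1; 2; 2; 1; 3; 1];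
  [:: 2; 1; 1; 0; 0; 0; 1; 1];
  [:: 0; 3; 0; 1; 3; 1; 3; 2];
  [:: 1; 3; 0; 2; 0; 2; 3; 2];
  [:: 1; 1; 0; 1; 3; 0; 3; 1];
  [:: 3; 2; 1; 2; 2; 2; 1; 0];
  [:: 0; 1; 1; 3; 3; 1; 0; 0]].
Definition A8_inv : seq (seq nat) := [::
  [:: 1; 1; 0; 2; 1; 0; 3; 1];
  [:: 1; 0; 1; 2; 1; 0; 1; 3];
  [:: 0; 1; 0; 0; 2; 2; 3; 3];
  [:: 3; 3; 0; 0; 3; 2; 0; 1];
  [:: 1; 1; 3; 2; 1; 3; 2; 3];
  [:: 0; 0; 3; 3; 2; 1; 3; 0];
  [:: 2; 1; 2; 0; 3; 2; 0; 2];
  [:: 1; 2; 2; 1; 2; 0; 3; 0]].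
Definition A8_lcd_inv : seq (seq nat) := [::
  [:: 1; 0; 0; 3; 3; 2; 2; 2];
  [:: 0; 1; 2; 3; 2; 0; 1; 2];
  [:: 0; 3; 1; 1; 1; 1; 2; 0];
  [:: 2; 2; 1; 0; 2; 0; 0; 2];
  [:: 2; 3; 1; 3; 0; 1; 3; 3];
  [:: 3; 0; 1; 0; 1; 0; 0; 1];
  [:: 3; 1; 3; 0; 2; 0; 0; 3];
  [:: 3; 3; 0; 3; 2; 1; 2; 1]].
Definition m8 : seq nat := [:: 1; 0; 0; 0; 0; 0; 0; 0].
Definition A10 : seq (seq nat) := [::
  [:: 1; 2; 1; 1; 3; 2; 0; 3; 3; 0];
  [:: 3; 1; 1; 2; 0; 2; 3; 2; 2; 0];
  [:: 1; 1; 1; 3; 3; 1; 3; 3; 1; 1];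
  [:: 1; 3; 2; 0; 3; 0; 2; 0; 3; 2];
  [:: 2; 0; 2; 2; 1; 3; 3; 0; 3; 3];
  [:: 3; 3; 1; 0; 2; 1; 3; 1; 1; 1];
  [:: 0; 2; 2; 3; 2; 2; 0; 3; 1; 3];
  [:: 2; 3; 2; 0; 0; 1; 2; 0; 2; 1];
  [:: 2; 3; 1; 2; 2; 1; 1; 3; 0; 0];
  [:: 0; 0; 1; 3; 2; 1; 2; 1; 0; 1]].
Definition A10_inv : seq (seq nat) := [::
  [:: 0; 3; 1; 2; 0; 3; 1; 2; 3; 0];
  [:: 2; 1; 2; 0; 0; 0; 0; 3; 1; 1];
  [:: 1; 3; 0; 3; 3; 2; 1; 3; 3; 1];
  [:: 3; 0; 2; 0; 1; 1; 0; 1; 1; 1];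
  [:: 0; 0; 2; 1; 0; 1; 1; 3; 3; 1];
  [:: 2; 0; 3; 1; 1; 0; 0; 1; 0; 3];
  [:: 1; 0; 1; 0; 1; 0; 0; 3; 2; 1];
  [:: 3; 2; 2; 1; 2; 1; 2; 1; 2; 0];
  [:: 2; 1; 2; 1; 2; 0; 3; 3; 0; 0];
  [:: 0; 1; 1; 1; 1; 2; 1; 0; 0; 0]].
Definition A10_lcd_inv : seq (seq nat) := [::
  [:: 1; 0; 3; 3; 0; 0; 1; 1; 2; 1];
  [:: 0; 1; 2; 0; 0; 1; 0; 2; 2; 0];
  [:: 2; 3; 1; 3; 2; 2; 0; 0; 0; 0];
  [:: 2; 0; 2; 1; 0; 0; 0; 3; 0; 1];
  [:: 0; 0; 3; 0; 0; 3; 2; 1; 2; 2];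
  [:: 0; 1; 3; 0; 2; 1; 1; 0; 3; 1];
  [:: 1; 0; 0; 0; 3; 1; 1; 1; 0; 1];
  [:: 1; 3; 0; 2; 1; 0; 1; 1; 1; 3];
  [:: 3; 3; 0; 0; 3; 2; 0; 1; 1; 0];
  [:: 1; 0; 0; 1; 3; 1; 1; 2; 0; 0]].
Definition m10 : seq nat := [:: 1; 2; 0; 0; 0; 0; 0; 0; 0; 0].
Definition A12 : seq (seq nat) := [::
  [:: 0; 1; 1; 1; 1; 1; 1; 1; 1; 1; 1; 1];
  [:: 1; 0; 2; 1; 1; 2; 3; 2; 3; 1; 1; 3];
  [:: 1; 3; 0; 2; 1; 1; 2; 3; 2; 3; 1; 1];
  [:: 1; 1; 3; 0; 2; 1; 1; 2; 3; 2; 3; 1];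
  [:: 1; 1; 1; 3; 0; 2; 1; 1; 2; 3; 2; 3];
  [:: 1; 3; 1; 1; 3; 0; 2; 1; 1; 2; 3; 2];
  [:: 1; 2; 3; 1; 1; 3; 0; 2; 1; 1; 2; 3];
  [:: 1; 3; 2; 3; 1; 1; 3; 0; 2; 1; 1; 2];
  [:: 1; 2; 3; 2; 3; 1; 1; 3; 0; 2; 1; 1];
  [:: 1; 1; 2; 3; 2; 3; 1; 1; 3; 0; 2; 1];
  [:: 1; 1; 1; 2; 3; 2; 3; 1; 1; 3; 0; 2];
  [:: 1; 2; 1; 1; 2; 3; 2; 3; 1; 1; 3; 0]].
Definition A12_inv : seq (seq nat) := [::
  [:: 1; 1; 1; 1; 1; 1; 1; 1; 1; 1; 1; 1];
  [:: 1; 1; 2; 1; 2; 2; 1; 1; 3; 3; 1; 3];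
  [:: 1; 3; 1; 2; 1; 2; 2; 1; 1; 3; 3; 1];
  [:: 1; 1; 3; 1; 2; 1; 2; 2; 1; 1; 3; 3];
  [:: 1; 3; 1; 3; 1; 2; 1; 2; 2; 1; 1; 3];
  [:: 1; 3; 3; 1; 3; 1; 2; 1; 2; 2; 1; 1];
  [:: 1; 1; 3; 3; 1; 3; 1; 2; 1; 2; 2; 1];
  [:: 1; 1; 1; 3; 3; 1; 3; 1; 2; 1; 2; 2];
  [:: 1; 2; 1; 1; 3; 3; 1; 3; 1; 2; 1; 2];
  [:: 1; 2; 2; 1; 1; 3; 3; 1; 3; 1; 2; 1];
  [:: 1; 1; 2; 2; 1; 1; 3; 3; 1; 3; 1; 2];
  [:: 1; 2; 1; 2; 2; 1; 1; 3; 3; 1; 3; 1]].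
Definition A12_lcd_inv : seq (seq nat) := [::
  [:: 1; 1; 1; 1; 1; 1; 1; 1; 1; 1; 1; 1];
  [:: 1; 1; 2; 2; 0; 3; 0; 0; 2; 0; 3; 3];
  [:: 1; 3; 1; 2; 2; 0; 3; 0; 0; 2; 0; 3];
  [:: 1; 3; 3; 1; 2; 2; 0; 3; 0; 0; 2; 0];
  [:: 1; 0; 3; 3; 1; 2; 2; 0; 3; 0; 0; 2];
  [:: 1; 2; 0; 3; 3; 1; 2; 2; 0; 3; 0; 0];
  [:: 1; 0; 2; 0; 3; 3; 1; 2; 2; 0; 3; 0];
  [:: 1; 0; 0; 2; 0; 3; 3; 1; 2; 2; 0; 3];
  [:: 1; 3; 0; 0; 2; 0; 3; 3; 1; 2; 2; 0];
  [:: 1; 0; 3; 0; 0; 2; 0; 3; 3; 1; 2; 2];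
  [:: 1; 2; 0; 3; 0; 0; 2; 0; 3; 3; 1; 2];
  [:: 1; 2; 2; 0; 3; 0; 0; 2; 0; 3; 3; 1]].
Definition m12 : seq nat := [:: 0; 1; 0; 0; 0; 2; 0; 0; 0; 0; 0; 0].

Lemma certificate8 : certificate 8 6 2 A8 A8_inv A8_lcd_inv m8.
Proof. by vm_compute. Qed.

Lemma certificate10 : certificate 10 7 3 A10 A10_inv A10_lcd_inv m10.
Proof. by vm_compute. Qed.

Lemma certificate12 : certificate 12 8 3 A12 A12_inv A12_lcd_inv m12.
Proof. by vm_compute. Qed.

Theorem theorem8 (F : finFieldType) (HF : #|F| = 4%N) (s : nat) (hs : (1 <= s)%N) :
  (exists C : {vspace 'rV[F]_(32 * s)}, herm_fsd_LCD_code C (16 * s) 6) /\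
  (exists C : {vspace 'rV[F]_(40 * s)}, herm_fsd_LCD_code C (20 * s) 7) /\
  (exists C : {vspace 'rV[F]_(48 * s)}, herm_fsd_LCD_code C (24 * s) 8).
Proof.
have pcharF : 2 \in [pchar F] by apply: (@card_finPcharP _ 2 2); rewrite ?HF.
have [w ww] := exists_gf4_root pcharF HF.
have gen8 := certificate_lcd_generator pcharF HF ww certificate8.
have gen10 := certificate_lcd_generator pcharF HF ww certificate10.
have gen12 := certificate_lcd_generator pcharF HF ww certificate12.
split; [|split].
- rewrite (_ : 16 * s = 8 * (2 * s))%N; last lia.
  by apply: exists_herm_fsd_LCD_code pcharF gen8 _ _; lia.
- rewrite (_ : 20 * s = 10 * (2 * s))%N; last lia.
  by apply: exists_herm_fsd_LCD_code pcharF gen10 _ _; lia.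
- rewrite (_ : 24 * s = 12 * (2 * s))%N; last lia.
  by apply: exists_herm_fsd_LCD_code pcharF gen12 _ _; lia.
Qed.
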